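(* Let $G$ be a GSOS system and $G^+$ the positive preg system constructed from it as described in the context. Then for each closed term $p$ and action $a$: (1) for all closed $p'$, $p\xrightarrow{a}p'$ in $G$ if and only if $p\xrightarrow{a}p'$ in $G^+$; (2) $p\ \mathrm{cannot}(a)$ holds in $G^+$ if and only if $p$ has no $a$-transition in $G^+$ (and therefore in $G$).
   Context: Fix a finite nonempty set $\mathcal A$ of actions. A GSOS rule for an $l$-ary operation $f$ is a rule with premises $\{x_i\xrightarrow{a_{ij}}y_{ij}\mid i\in I^+,j\in I_i\}\cup\{x_i\not\xrightarrow{b}\mid i\in I^-,b\in\mathcal B_i\}$ and conclusion $f(x_1,\dots,x_l)\xrightarrow{c}C$, where the $x_i,y_{ij}$ are pairwise distinct variables, $I^+,I^-\subseteq\{1,\dots,l\}$, the $I_i$ finite, and $C$ a term with variables among the $x_i,y_{ij}$. A GSOS system $G$ is a finite signature with finite set of such rules; its transition relation is the unique one on closed terms such that $f(t_1,\ldots,t_l)\xrightarrow{c}t'$ iff some rule for $f$ with action $c$ and closed substitution $\sigma$ with $\sigma(x_i)=t_i$, $\sigma(C)=t'$ satisfy all premises ($\sigma(x_i)\xrightarrow{a_{ij}}\sigma(y_{ij})$; $\sigma(x_i)$ has no $b$-transition). A preg system additionally allows predicates: premises $Px_i$, $\neg Px_i$ and predicate rules with conclusion $P(f(\vec x))$, with the analogous unique semantics (a closed $f(\vec t)$ satisfies $P$ iff some predicate rule for $P$ and $f$ has all premises satisfied under some $\sigma$ with $\sigma(x_i)=t_i$). Construction of $G^+$: same signature and actions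 as $G$, predicates $\mathrm{cannot}(a)$ for each $a\in\mathcal A$. (i) Each rule of $G$ is a rule of $G^+$ with every negative premise $x\not\xrightarrow{a}$ replaced by $x\ \mathrm{cannot}(a)$. (ii) For each constant $f$ and action $a$ such that $G$ has no transition rule with principal operation $f$ and action $a$, add the axiom $f\ \mathrm{cannot}(a)$. (iii) For each operation $f$ of arity $\ge1$ and action $a$, let $R(f,a)$ be the set of rules of $G$ with principal operation $f$ and action $a$, and $H(R(f,a))$ the set of premises of those rules; for each choice function $\phi:R(f,a)\to H(R(f,a))$ mapping each rule to one of its premises, add the predicate rule with premises $\{\mathrm{neg}(\phi(\xi))\mid\xi\in R(f,a)\}$ and conclusion $f(x_1,\dots,x_l)\ \mathrm{cannot}(a)$, where $\mathrm{neg}(x\xrightarrow{a}x')=x\ \mathrm{cannot}(a)$ and $\mathrm{neg}(x\not\xrightarrow{a})=x\xrightarrow{a}x'$ for a variable $x'$, the targets of such positive transition premises being chosen pairwise distinct and fresh. *)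

From Stdlib Require List.
From mathcomp Require Import all_boot.
Set Implicit Arguments.
Unset Strict Implicit.
Unset Printing Implicit Defensive.

Inductive term (F V : Type) : Type :=
| Var of V
| App of F & seq (term F V).
Arguments Var {F V}.
Arguments App {F V}.

Definition cterm (F : Type) := term F Empty_set.

Fixpoint subst (F V W : Type) (s : V -> term F W) (t : term F V) : term F W :=
  match t with
  | Var v => s v
  | App f ts => App f (map (subst s) ts)
  end.

Fixpoint wf_term (F V : Type) (ar : F -> nat) (okv : V -> Prop) (t : term F V)
  : Prop :=
  match t with
  | Var v => okv v
  | App f ts => size ts = ar f /\ foldr and True (map (wf_term ar okv) ts)
  end.

Definition wf_closed (F : Type) (ar : F -> nat) (t : cterm F) : Prop :=
  wf_term ar (fun _ => False) t.

(* GX i is the argument variable x_{i+1} of the conclusion f(x_1,...,x_l);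
   GY k is the target variable of the k-th positive transition premise
   (numbered from 0).  Hence all variables x_i, y_ij are pairwise distinct
   by construction. *)
Inductive gvar := GX of nat | GY of nat.

(* Positive premises: list of (i, a) meaning x_i --a--> GY k (k = position);
   negative premises: list of (i, b) meaning x_i -/-b->. *)
Record gsos_rule (F A : Type) := GRule {
  g_op  : F;
  g_pos : seq (nat * A);
  g_neg : seq (nat * A);
  g_act : A;
  g_tgt : term F gvar }.

Record gsos (F A : Type) := GSOS {
  g_ar : F -> nat;
  g_rules : seq (gsos_rule F A) }.

Definition wf_gsos_rule (F A : Type) (ar : F -> nat) (r : gsos_rule F A) : Prop :=
  (forall k i a, onth (g_pos r) k = Some (i, a) -> i < ar (g_op r)) /\
  (forall i b, List.In (i, b) (g_neg r) -> i < ar (g_op r)) /\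
  wf_term ar (fun v => match v with
                       | GX i => i < ar (g_op r)
                       | GY k => k < size (g_pos r) end) (g_tgt r).

Definition wf_gsos (F A : Type) (G : gsos F A) : Prop :=
  forall r, List.In r (g_rules G) -> wf_gsos_rule (g_ar G) r.

Definition agrees (F : Type) (ts : seq (cterm F)) (s : gvar -> cterm F) : Prop :=
  forall i t, onth ts i = Some t -> s (GX i) = t.

(* The transition relation of a GSOS system, defined by structural recursion
   on the source term (this is the unique relation of the definition). *)
Definition gtrans (F A : Type) (G : gsos F A) :
  cterm F -> A -> cterm F -> Prop :=
  fix go (p : cterm F) : A -> cterm F -> Prop :=
  match p with
  | Var v => match v with end
  | App f ts =>
      let Ts := map go ts in
      fun c t' =>
        exists r, List.In r (g_rules G) /\ g_op r = f /\ g_act r = c /\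
        exists s : gvar -> cterm F,
          agrees ts s /\
          (forall k i a, onth (g_pos r) k = Some (i, a) ->
             exists T, onth Ts i = Some T /\ T a (s (GY k))) /\
          (forall i b, List.In (i, b) (g_neg r) ->
             exists T, onth Ts i = Some T /\ forall u, ~ T b u) /\
          t' = subst s (g_tgt r)
  end.

Record premises (A P : Type) := Prem {
  pr_pos  : seq (nat * A);   (* x_i --a--> GY k, k = position *)
  pr_neg  : seq (nat * A);
  pr_ppos : seq (nat * P);
  pr_pneg : seq (nat * P) }.

Record preg_trule (F A P : Type) := PTRule {
  t_op : F; t_prem : premises A P; t_act : A; t_tgt : term F gvar }.

Record preg_prule (F A P : Type) := PPRule {
  q_op : F; q_prem : premises A P; q_pred : P }.

Record preg (F A P : Type) := Preg {
  p_ar : F -> nat;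
  p_trules : seq (preg_trule F A P);
  p_prules : seq (preg_prule F A P) }.

Definition psem_t (F A P : Type) := ((A -> cterm F -> Prop) * (P -> Prop))%type.

Definition prem_sat (F A P : Type) (Ss : seq (psem_t F A P))
    (s : gvar -> cterm F) (pr : premises A P) : Prop :=
  (forall k i a, onth (pr_pos pr) k = Some (i, a) ->
     exists S, onth Ss i = Some S /\ S.1 a (s (GY k))) /\
  (forall i b, List.In (i, b) (pr_neg pr) ->
     exists S, onth Ss i = Some S /\ forall u, ~ S.1 b u) /\
  (forall i q, List.In (i, q) (pr_ppos pr) ->
     exists S, onth Ss i = Some S /\ S.2 q) /\
  (forall i q, List.In (i, q) (pr_pneg pr) ->
     exists S, onth Ss i = Some S /\ ~ S.2 q).

Definition psem (F A P : Type) (G : preg F A P) : cterm F -> psem_t F A P :=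
  fix go (p : cterm F) : psem_t F A P :=
  match p with
  | Var v => match v with end
  | App f ts =>
      let Ss := map go ts in
      (fun c t' =>
         exists r, List.In r (p_trules G) /\ t_op r = f /\ t_act r = c /\
         exists s : gvar -> cterm F,
           agrees ts s /\ prem_sat Ss s (t_prem r) /\ t' = subst s (t_tgt r),
       fun q =>
         exists r, List.In r (p_prules G) /\ q_op r = f /\ q_pred r = q /\
         exists s : gvar -> cterm F, agrees ts s /\ prem_sat Ss s (q_prem r))
  end.

Definition ptrans (F A P : Type) (G : preg F A P) (p : cterm F) (a : A)
  (p' : cterm F) : Prop := (psem G p).1 a p'.

Definition pholds (F A P : Type) (G : preg F A P) (p : cterm F) (q : P) : Prop :=
  (psem G p).2 q.

(* Predicates of G^+: cannot(a) for a : A, represented by a itself. *)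
Section Plus.
Variables (F A : finType) (G : gsos F A).

(* (i) negative premises x -/-b-> become x cannot(b) *)
Definition plus_trule (r : gsos_rule F A) : preg_trule F A A :=
  PTRule (g_op r) (Prem (g_pos r) [::] (g_neg r) [::]) (g_act r) (g_tgt r).

(* (ii) axioms f cannot(a) for constants without a-rules *)
Definition plus_axioms : seq (preg_prule F A A) :=
  flatten [seq [seq PPRule f (Prem [::] [::] [::] [::]) a
               | a <- enum A & ~~ has (fun r => (g_op r == f) && (g_act r == a))
                                     (g_rules G)]
          | f <- enum F & g_ar G f == 0].

(* a premise of a GSOS rule: inl (i,a) = x_i --a--> y, inr (i,b) = x_i -/-b-> *)
Definition gprem (A' : Type) := ((nat * A') + (nat * A'))%type.

Definition prems_of (r : gsos_rule F A) : seq (gprem A) :=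
  map inl (g_pos r) ++ map inr (g_neg r).

(* all choice functions phi : R(f,a) -> premises, as lists of chosen premises *)
Definition choices (rs : seq (gsos_rule F A)) : seq (seq (gprem A)) :=
  foldr (fun r acc => [seq x :: l | x <- prems_of r, l <- acc]) [:: [::]] rs.

(* neg applied to every chosen premise; fresh pairwise distinct targets are
   given by the positional GY k variables *)
Definition neg_prems (ch : seq (gprem A)) : premises A A :=
  Prem (pmap (fun x => match x with inr ib => Some ib | inl _ => None end) ch)
       [::]
       (pmap (fun x => match x with inl ia => Some ia | inr _ => None end) ch)
       [::].

Definition R_fa (f : F) (a : A) : seq (gsos_rule F A) :=
  [seq r <- g_rules G | (g_op r == f) && (g_act r == a)].

Definition plus_neg_rules : seq (preg_prule F A A) :=
  flatten (flatten
    [seq [seq [seq PPRule f (neg_prems ch) a | ch <- choices (R_fa f a)]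
         | a <- enum A]
    | f <- enum F & 0 < g_ar G f]).

Definition Gplus : preg F A A :=
  Preg (g_ar G) (map plus_trule (g_rules G)) (plus_axioms ++ plus_neg_rules).

End Plus.

From Stdlib Require List.
From Stdlib Require Import Classical ClassicalEpsilon.
From mathcomp Require Import all_boot.
Set Implicit Arguments.
Unset Strict Implicit.
Unset Printing Implicit Defensive.

(* A transition rule of G^+ differs from
   the GSOS rule it comes from only in reading x -/-b-> as x cannot(b), so by
   the induction hypothesis on the arguments both systems fire the same rules.
   f(ts) has no a-transition iff every rule for (f, a) has a premise that fails
   at ts, i.e. whose negation holds; choosing one such premise per rule is
   exactly a choice function of (iii), and for a constant, whose rules have no
   premises, it means there is no rule at all, which is the axiom (ii). *)

Lemma onth_In (X : Type) (s : seq X) i x : onth s i = Some x -> List.In x s.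
Proof. by elim: s i => [|y s IH] [|i] //= => [[->]|/IH]; [left | right]. Qed.

Lemma In_onth (X : Type) (s : seq X) x : List.In x s -> exists i, onth s i = Some x.
Proof.
by elim: s => [|y s IH] //= [->|/IH [i Hi]]; [exists 0 | exists i.+1].
Qed.

Lemma onth_lt (X : Type) (s : seq X) i : i < size s -> exists x, onth s i = Some x.
Proof. by elim: s i => [|y s IH] [|i] //= => [_|/IH]; [exists y|]. Qed.

Lemma In_enum (T : finType) (x : T) : List.In x (enum T).
Proof.
have /onthP [i Hi] : x \in enum T by rewrite mem_enum.
exact: onth_In Hi.
Qed.

Lemma onth_map_exists (X Y : Type) (g : X -> Y) (s : seq X) i (Q : Y -> Prop) :
  (exists y, onth (map g s) i = Some y /\ Q y) <->
  (exists x, onth s i = Some x /\ Q (g x)).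
Proof.
rewrite onth_map; case: (onth s i) => [x|] /=; last by split=> -[? []].
by split=> -[y [[<-] Hy]]; [exists x | exists (g x)].
Qed.

Lemma In_pmap (X Y : Type) (g : X -> option Y) (s : seq X) y :
  List.In y (pmap g s) <-> exists x, List.In x s /\ g x = Some y.
Proof.
elim: s => [|x s IH] /=; first by split=> // -[? []].
case Hx: (g x) => [z|] /=; rewrite IH; split.
- by case=> [<-|[w [? ?]]]; [exists x | exists w]; auto.
- by case=> w [[<-|?] H]; [left; congruence | right; exists w].
- by case=> w [? ?]; exists w; auto.
- by case=> w [[<-|?] H]; [congruence | exists w].
Qed.

Definition term_ind_In (F V : Type) (P : term F V -> Prop)
    (HV : forall v, P (Var v))
    (HA : forall f ts, (forall t, List.In t ts -> P t) -> P (App f ts)) :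
  forall t, P t :=
  fix go t := match t with
  | Var v => HV v
  | App f ts => HA f ts
      ((fix go_list (l : seq (term F V)) : forall t, List.In t l -> P t :=
          match l with
          | [::] => fun t H => False_ind _ H
          | u :: l' => fun t H => match H with
              | or_introl e => eq_ind u P (go u) t e
              | or_intror H' => go_list l' t H' end
          end) ts)
  end.

Lemma foldr_and_map (X : Type) (P : X -> Prop) (s : seq X) :
  foldr and True (map P s) <-> forall x, List.In x s -> P x.
Proof.
elim: s => [|x s IH] /=; first by split.
by rewrite IH; split=> [[Hx Hs] y [<-|/Hs]|H]; auto.
Qed.

Lemma wf_closed_App (F : Type) (ar : F -> nat) f (ts : seq (cterm F)) :
  wf_closed ar (App f ts) <->
  size ts = ar f /\ forall t, List.In t ts -> wf_closed ar t.
Proof. by rewrite /wf_closed /= foldr_and_map. Qed.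

Lemma wf_closed_ind (F : Type) (ar : F -> nat) (P : cterm F -> Prop) :
  (forall f ts, size ts = ar f -> (forall t, List.In t ts -> wf_closed ar t) ->
     (forall t, List.In t ts -> P t) -> P (App f ts)) ->
  forall p, wf_closed ar p -> P p.
Proof.
move=> HA; apply: term_ind_In => [[]|f ts IH /wf_closed_App [Hsz Hts]].
by apply: HA => // t Ht; apply: IH (Hts t Ht).
Qed.

Lemma wf_subst (F V W : Type) (ar : F -> nat) (okv : V -> Prop)
    (okw : W -> Prop) (s : V -> term F W) (t : term F V) :
  wf_term ar okv t -> (forall v, okv v -> wf_term ar okw (s v)) ->
  wf_term ar okw (subst s t).
Proof.
move=> + Hs; elim/term_ind_In: t => [v /Hs //|f ts IH /= [Hsz /foldr_and_map Hts]].
split; first by rewrite size_map.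
by apply/foldr_and_map => _ /List.in_map_iff [t [<- Ht]]; apply: IH (Hts t Ht).
Qed.

Lemma choices_spec (F A : finType) (P : gprem A -> Prop)
    (rs : seq (gsos_rule F A)) :
  (exists ch, List.In ch (choices rs) /\ forall x, List.In x ch -> P x) <->
  (forall r, List.In r rs -> exists x, List.In x (prems_of r) /\ P x).
Proof.
elim: rs => [|r rs IH] /=.
  by split=> [_ r []|_]; exists [::]; split=> [|x []]; left.
split.
- move=> [c [Hc HP]] r' Hr'.
  have [l [/List.in_map_iff [x [El Hx]] Hcl]] := proj1 (List.in_concat _ _) Hc.
  have [ch [Ec Hch]] := proj1 (List.in_map_iff _ _ _) (eq_ind_r _ Hcl El).
  subst c; case: Hr' => [<-|Hr'].
    by exists x; split=> //; apply: HP; left.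
  by apply: (proj1 IH) Hr'; exists ch; split=> // y Hy; apply: HP; right.
- move=> H; have [x [Hx Px]] := H r (or_introl erefl).
  have [ch [Hch HP]] := proj2 IH (fun r' Hr' => H r' (or_intror Hr')).
  exists (x :: ch); split; last by move=> y [<-|/HP].
  apply/List.in_concat; exists [seq x :: l | l <- choices rs].
  by split; apply/List.in_map_iff; [exists x | exists ch].
Qed.

Lemma prems_of_nullary (F A : finType) (ar : F -> nat) (r : gsos_rule F A) :
  wf_gsos_rule ar r -> ar (g_op r) = 0 -> prems_of r = [::].
Proof.
case=> Hpos [Hneg _] Har; rewrite /prems_of.
case E: (g_pos r) => [|[i a] ?]; first case: (g_neg r) Hneg => [//|[i b] ?] Hneg.
- by have := Hneg i b (or_introl erefl); rewrite Har.
- by have := Hpos 0 i a; rewrite E Har => /(_ erefl).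
Qed.

Lemma In_plus_axioms (F A : finType) (G : gsos F A) q :
  List.In q (plus_axioms G) <-> exists f a, g_ar G f = 0 /\
    ~~ has (fun r => (g_op r == f) && (g_act r == a)) (g_rules G) /\
    q = PPRule f (Prem [::] [::] [::] [::]) a.
Proof.
rewrite /plus_axioms; split.
- move=> /List.in_concat [l [/List.in_map_iff [f [<- /List.filter_In [_ /eqP Hf]]]]].
  by move=> /List.in_map_iff [a [<- /List.filter_In [_ Ha]]]; exists f, a.
- move=> [f [a [Hf [Ha ->]]]]; apply/List.in_concat; eexists; split.
  + apply/List.in_map_iff; exists f; split; first reflexivity.
    by apply/List.filter_In; split; [apply: In_enum | apply/eqP].
  + apply/List.in_map_iff; exists a; split=> //.
    by apply/List.filter_In; split; [apply: In_enum |].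
Qed.


Lemma In_plus_neg_rules (F A : finType) (G : gsos F A) q :
  List.In q (plus_neg_rules G) <-> exists f a ch, 0 < g_ar G f /\
    List.In ch (choices (R_fa G f a)) /\ q = PPRule f (neg_prems ch) a.
Proof.
rewrite /plus_neg_rules; split.
- move=> /List.in_concat [l [/List.in_concat [m [/List.in_map_iff [f [<- Hf]]]]]].
  move: Hf => /List.filter_In [_ Hf] /List.in_map_iff [a [<- _]].
  by move=> /List.in_map_iff [ch [<- Hch]]; exists f, a, ch.
- move=> [f [a [ch [Hf [Hch ->]]]]]; apply/List.in_concat.
  exists [seq PPRule f (neg_prems ch0) a | ch0 <- choices (R_fa G f a)].
  split; last by apply/List.in_map_iff; exists ch.
  apply/List.in_concat; eexists; split.
  + apply/List.in_map_iff; exists f; split; first reflexivity.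
    by apply/List.filter_In; split; [apply: In_enum |].
  + by apply/List.in_map_iff; exists a; split; last apply: In_enum.
Qed.

Lemma exists_agreeing_subst (F X : Type) (R : cterm F -> X -> cterm F -> Prop)
    (ts : seq (cterm F)) (pos : seq (nat * X)) (d : cterm F) :
  (forall k i b, onth pos k = Some (i, b) ->
     exists t u, onth ts i = Some t /\ R t b u) ->
  exists s, agrees ts s /\ forall k i b, onth pos k = Some (i, b) ->
     exists t, onth ts i = Some t /\ R t b (s (GY k)).
Proof.
move=> H.
have [tgt Htgt] : exists tgt : nat -> cterm F, forall k i b,
    onth pos k = Some (i, b) -> exists t, onth ts i = Some t /\ R t b (tgt k).
  apply: (choice (fun k u => forall i b, onth pos k = Some (i, b) ->
                    exists t, onth ts i = Some t /\ R t b u)) => k.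
  case E: (onth pos k) => [[i b]|]; last by exists d.
  have [t [u [Ht Hu]]] := H _ _ _ E.
  by exists u => _ _ [<- <-]; exists t.
exists (fun v => match v with GX i => nth d ts i | GY k => tgt k end).
by split=> // i t Hi; apply: onth_nth.
Qed.

Section GplusSemantics.
Variables (F A : finType) (G : gsos F A).
Hypothesis HG : wf_gsos G.

Lemma ptrans_Gplus_App f ts c t' :
  ptrans (Gplus G) (App f ts) c t' <->
  exists r, List.In r (g_rules G) /\ g_op r = f /\ g_act r = c /\
    exists s, agrees ts s /\
      prem_sat (map (psem (Gplus G)) ts) s (t_prem (plus_trule r)) /\
      t' = subst s (g_tgt r).
Proof.
split=> [[_ [/List.in_map_iff [r [<- Hr]] H]]|[r [Hr H]]]; first by exists r.
by exists (plus_trule r); split=> //; apply/List.in_map_iff; exists r.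
Qed.

Lemma pholds_Gplus_App f ts a :
  pholds (Gplus G) (App f ts) a <->
  (g_ar G f = 0 /\ ~~ has (fun r => (g_op r == f) && (g_act r == a)) (g_rules G)) \/
  (0 < g_ar G f /\ exists ch, List.In ch (choices (R_fa G f a)) /\
     exists s, agrees ts s /\ prem_sat (map (psem (Gplus G)) ts) s (neg_prems ch)).
Proof.
split.
- move=> [q [/List.in_app_iff [/In_plus_axioms|/In_plus_neg_rules] H [Hop [Hq Hs]]]].
  + by case: H => [f' [a' [Har [Hnone Eq]]]]; subst q; simpl in *; subst; left.
  + case: H => [f' [a' [ch [Har [Hch Eq]]]]]; subst q; simpl in *; subst.
    by right; split=> //; exists ch.
- case=> [[Har Hnone]|[Har [ch [Hch Hs]]]].
  + exists (PPRule f (Prem [::] [::] [::] [::]) a); split.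
      by apply/List.in_app_iff; left; apply/In_plus_axioms; exists f, a.
    do 2 split=> //.
    exists (fun v => if v is GX i then nth (App f ts) ts i else App f ts).
    split=> [i t /= Hi|]; first exact: onth_nth Hi.
    by split; [move=> k i b; rewrite onth0n | do !split; move=> ? ? []].
  + exists (PPRule f (neg_prems ch) a); split.
      by apply/List.in_app_iff; right; apply/In_plus_neg_rules; exists f, a, ch.
    by do 2 split=> //.
Qed.

Lemma ptrans_Gplus_wf p : wf_closed (g_ar G) p ->
  forall a p', ptrans (Gplus G) p a p' -> wf_closed (g_ar G) p'.
Proof.
move: p; apply: wf_closed_ind => f ts Hsz Hts IH a p'.
case/ptrans_Gplus_App => r [Hr [Hop [_ [s [Hag [[Hpos _] ->]]]]]].
have [_ [_ Htgt]] := HG Hr.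
apply: (wf_subst Htgt) => -[i|k] /= Hv.
- have [t Ht] : exists t, onth ts i = Some t by apply: onth_lt; rewrite Hsz -Hop.
  by rewrite (Hag _ _ Ht); apply: Hts (onth_In Ht).
- have [[i b] Hk] := onth_lt Hv.
  have /onth_map_exists [t [Ht Htr]] := Hpos _ _ _ Hk.
  exact: IH (onth_In Ht) _ _ Htr.
Qed.

Section Step.
Variables (f : F) (ts : seq (cterm F)).
Hypothesis Hsz : size ts = g_ar G f.
Hypothesis IHcannot : forall t, List.In t ts -> forall b,
  pholds (Gplus G) t b <-> ~ exists u, ptrans (Gplus G) t b u.

(* The premise neg(x) of a rule (iii) holds at the arguments [ts]. *)
Definition refutes (x : gprem A) : Prop :=
  match x with
  | inl (i, b) => exists t, onth ts i = Some t /\ pholds (Gplus G) t b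
  | inr (i, b) => exists t u, onth ts i = Some t /\ ptrans (Gplus G) t b u
  end.

Lemma neg_prems_sat ch :
  (exists s, agrees ts s /\
     prem_sat (map (psem (Gplus G)) ts) s (neg_prems ch)) <->
  forall x, List.In x ch -> refutes x.
Proof.
split.
- move=> [s [_ [Hpos [_ [Hppos _]]]]] [[i b]|[i b]] Hx /=.
  + have Hin : List.In (i, b) (pr_ppos (neg_prems ch)).
      by apply/In_pmap; exists (inl (i, b)).
    by have /onth_map_exists [t [Ht Hb]] := Hppos _ _ Hin; exists t.
  + have [k Hk] : exists k, onth (pr_pos (neg_prems ch)) k = Some (i, b).
      by apply/In_onth/In_pmap; exists (inr (i, b)).
    have /onth_map_exists [t [Ht Htr]] := Hpos _ _ _ Hk.
    by exists t, (s (GY k)).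
- move=> Href.
  have [|s [Hag Hpos]] := @exists_agreeing_subst _ _ (ptrans (Gplus G)) ts
    (pr_pos (neg_prems ch)) (App f ts).
    move=> k i b Hk.
    have /In_pmap [[[? ?]|[i' b']] [Hx //= [<- <-]]] := onth_In Hk.
    exact: Href Hx.
  exists s; split=> //; split; [|split; [by []|split; [|by []]]].
  + by move=> k i b /Hpos [t [Ht Htr]]; apply/onth_map_exists; exists t.
  + move=> i b /In_pmap [[[i' b']|[? ?]] [Hx //= [<- <-]]].
    by have [t [Ht Hb]] := Href _ Hx; apply/onth_map_exists; exists t.
Qed.

Lemma plus_trule_sat r : List.In r (g_rules G) -> g_op r = f ->
  (exists s, agrees ts s /\
     prem_sat (map (psem (Gplus G)) ts) s (t_prem (plus_trule r))) <->
  forall x, List.In x (prems_of r) -> ~ refutes x.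
Proof.
move=> Hr Hop; have [Hwpos [Hwneg _]] := HG Hr.
have arg i : i < g_ar G (g_op r) -> exists t, onth ts i = Some t /\ List.In t ts.
  by rewrite Hop -Hsz => /onth_lt [t Ht]; exists t; split=> //; apply: onth_In Ht.
split.
- move=> [s [_ [Hpos [_ [Hppos _]]]]] x.
  case/List.in_app_iff=> /List.in_map_iff [[i b] [<- Hib]] /=.
  + move=> [t [Ht Hb]]; have [k Hk] := In_onth Hib.
    have /onth_map_exists [t' [Ht' Htr]] := Hpos _ _ _ Hk.
    move: Ht'; rewrite Ht => -[Et]; subst t'.
    by move/(IHcannot (onth_In Ht)): Hb; apply; exists (s (GY k)).
  + move=> [t [u [Ht Htr]]].
    have /onth_map_exists [t' [Ht' Hb]] := Hppos _ _ Hib.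
    move: Ht'; rewrite Ht => -[Et]; subst t'.
    by move/(IHcannot (onth_In Ht)): Hb; apply; exists u.
- move=> Hen.
  have [|s [Hag Hpos]] := @exists_agreeing_subst _ _ (ptrans (Gplus G)) ts
    (g_pos r) (App f ts).
    move=> k i b Hk; have [t [Ht Hin]] := arg i (Hwpos _ _ _ Hk).
    exists t; apply: NNPP => Hno; apply: (Hen (inl (i, b))).
      apply/List.in_app_iff; left; apply/List.in_map_iff.
      by exists (i, b); split=> //; apply: onth_In Hk.
    exists t; split=> //; apply/(IHcannot Hin) => -[u Hu].
    by apply: Hno; exists u.
  exists s; split=> //; split; [|split; [by []|split; [|by []]]].
  + by move=> k i b /Hpos [t [Ht Htr]]; apply/onth_map_exists; exists t.
  + move=> i b Hib; have [t [Ht Hin]] := arg i (Hwneg _ _ Hib).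
    apply/onth_map_exists; exists t; split=> //.
    apply/(IHcannot Hin) => -[u Hu]; apply: (Hen (inr (i, b))).
      by apply/List.in_app_iff; right; apply/List.in_map_iff; exists (i, b).
    by exists t, u.
Qed.

Lemma exists_ptrans_Gplus_App a :
  (exists t', ptrans (Gplus G) (App f ts) a t') <->
  exists r, List.In r (R_fa G f a) /\
    forall x, List.In x (prems_of r) -> ~ refutes x.
Proof.
split.
- move=> [t' /ptrans_Gplus_App [r [Hr [Hop [Hact [s [Hag [Hsat _]]]]]]]].
  exists r; split; first by apply/List.filter_In; rewrite Hop Hact !eqxx.
  by apply/plus_trule_sat => //; exists s.
- move=> [r [/List.filter_In [Hr /andP [/eqP Hop /eqP Hact]]]].
  move=> /(plus_trule_sat Hr Hop) [s [Hag Hsat]].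
  exists (subst s (g_tgt r)); apply/ptrans_Gplus_App.
  by exists r; do 3 split=> //; exists s.
Qed.

Lemma Gplus_cannot_App a :
  pholds (Gplus G) (App f ts) a <->
  ~ exists t', ptrans (Gplus G) (App f ts) a t'.
Proof.
have blocked : (~ exists t', ptrans (Gplus G) (App f ts) a t') <->
    forall r, List.In r (R_fa G f a) ->
      exists x, List.In x (prems_of r) /\ refutes x.
  rewrite exists_ptrans_Gplus_App; split=> [H r Hr|H [r [Hr Hen]]].
    apply: NNPP => Hno; apply: H; exists r; split=> // x Hx Href.
    by apply: Hno; exists x.
  by have [x [Hx Href]] := H r Hr; apply: Hen Href.
rewrite blocked pholds_Gplus_App; have [Har|Har] := posnP (g_ar G f).
- have Hnil r : List.In r (R_fa G f a) -> prems_of r = [::].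
    move=> /List.filter_In [Hr /andP [/eqP Hop _]].
    by apply: prems_of_nullary (HG Hr) _; rewrite Hop.
  split=> [[[_ Hnone] r Hr|[]]|H]; rewrite ?Har //.
    move/negP: Hnone; case; apply/List.existsb_exists; exists r.
    by case/List.filter_In: Hr.
  left; split=> //; apply/negP => /List.existsb_exists [r [Hr Hp]].
  have Hr' : List.In r (R_fa G f a) by apply/List.filter_In.
  by have [x []] := H r Hr'; rewrite Hnil.
- rewrite -(choices_spec refutes); split.
    case=> [[Har0 _]|[_ [ch [Hch Hs]]]]; first by rewrite Har0 in Har.
    by exists ch; split=> //; apply/neg_prems_sat.
  move=> [ch [Hch Href]]; right; split=> //.
  by exists ch; split=> //; apply/neg_prems_sat.
Qed.

End Step.

Lemma Gplus_cannot p a : wf_closed (g_ar G) p ->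
  pholds (Gplus G) p a <-> ~ exists p', ptrans (Gplus G) p a p'.
Proof.
move=> Hp; move: p Hp a; apply: wf_closed_ind => f ts Hsz _ IH a.
exact: Gplus_cannot_App.
Qed.

Definition gprem_sat (Ts : seq (A -> cterm F -> Prop)) (s : gvar -> cterm F)
    (r : gsos_rule F A) : Prop :=
  (forall k i b, onth (g_pos r) k = Some (i, b) ->
     exists T, onth Ts i = Some T /\ T b (s (GY k))) /\
  (forall i b, List.In (i, b) (g_neg r) ->
     exists T, onth Ts i = Some T /\ forall u, ~ T b u).

Lemma gtrans_App f ts c t' :
  gtrans G (App f ts) c t' <->
  exists r, List.In r (g_rules G) /\ g_op r = f /\ g_act r = c /\
    exists s, agrees ts s /\ gprem_sat (map (gtrans G) ts) s r /\
      t' = subst s (g_tgt r).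
Proof.
split.
- move=> [r [Hr [Hop [Hact [s [Hag [Hpos [Hneg ->]]]]]]]].
  by exists r; do 3 split=> //; exists s.
- move=> [r [Hr [Hop [Hact [s [Hag [[Hpos Hneg] ->]]]]]]].
  by exists r; do 3 split=> //; exists s.
Qed.

Lemma prem_sat_plus_trule ts s r :
  (forall t, List.In t ts -> forall b u,
     gtrans G t b u <-> ptrans (Gplus G) t b u) ->
  (forall t, List.In t ts -> forall b,
     pholds (Gplus G) t b <-> ~ exists u, ptrans (Gplus G) t b u) ->
  prem_sat (map (psem (Gplus G)) ts) s (t_prem (plus_trule r)) <->
  gprem_sat (map (gtrans G) ts) s r.
Proof.
move=> IHtrans IHcannot.
split=> [[Hpos [_ [Hppos _]]]|[Hpos Hneg]]; first split.
- move=> k i b /Hpos /onth_map_exists [t [Ht Htr]].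
  by apply/onth_map_exists; exists t; split=> //; apply/(IHtrans t (onth_In Ht)).
- move=> i b /Hppos /onth_map_exists [t [Ht Hb]].
  apply/onth_map_exists; exists t; split=> // u /(IHtrans t (onth_In Ht)) Hu.
  by move/(IHcannot t (onth_In Ht)): Hb; apply; exists u.
- split; [|split; [by []|split; [|by []]]].
  + move=> k i b /Hpos /onth_map_exists [t [Ht Htr]].
    by apply/onth_map_exists; exists t; split=> //; apply/(IHtrans t (onth_In Ht)).
  + move=> i b /Hneg /onth_map_exists [t [Ht Hno]].
    apply/onth_map_exists; exists t; split=> //.
    by apply/(IHcannot t (onth_In Ht)) => -[u /(IHtrans t (onth_In Ht))/Hno].
Qed.

Lemma gtrans_Gplus p a p' : wf_closed (g_ar G) p ->
  gtrans G p a p' <-> ptrans (Gplus G) p a p'.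
Proof.
move=> Hp; move: p Hp a p'; apply: wf_closed_ind => f ts _ Hts IH a p'.
have IHcannot t (Ht : List.In t ts) b := Gplus_cannot b (Hts t Ht).
rewrite gtrans_App ptrans_Gplus_App.
by split=> -[r [Hr [Hop [Hact [s [Hag [Hsat ->]]]]]]]; exists r; do 3 split=> //;
  exists s; do 2 split=> //; apply/(prem_sat_plus_trule _ _ IH IHcannot).
Qed.

End GplusSemantics.

Theorem lemma6 (F A : finType) (G : gsos F A) (HG : wf_gsos G)
    (p : cterm F) (a : A) (Hp : wf_closed (g_ar G) p) :
  (forall p' : cterm F, wf_closed (g_ar G) p' ->
     (gtrans G p a p' <-> ptrans (Gplus G) p a p')) /\
  (pholds (Gplus G) p a <->
     ~ (exists p' : cterm F, wf_closed (g_ar G) p' /\ ptrans (Gplus G) p a p')) /\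
  (pholds (Gplus G) p a <->
     ~ (exists p' : cterm F, wf_closed (g_ar G) p' /\ gtrans G p a p')).
Proof.
have Hwf := ptrans_Gplus_wf HG Hp.
have Htrans p' := gtrans_Gplus HG a p' Hp.
have ptrans_wf : (exists p', wf_closed (g_ar G) p' /\ ptrans (Gplus G) p a p') <->
    exists p', ptrans (Gplus G) p a p'.
  split=> [[p' [_ Hp']]|[p' Hp']]; exists p' => //.
  by split=> //; apply: Hwf Hp'.
have gtrans_wf : (exists p', wf_closed (g_ar G) p' /\ gtrans G p a p') <->
    exists p', ptrans (Gplus G) p a p'.
  split=> [[p' [_ /Htrans Hp']]|[p' Hp']]; exists p'=> //.
  by split; [apply: Hwf Hp' | apply/Htrans].
split; first by move=> p' _; apply: Htrans.
by rewrite ptrans_wf gtrans_wf; split; apply: Gplus_cannot.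
Qed.
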